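(* In the lamination game described in the context, suppose the allocation $\alpha$ is locally free, i.e. almost surely $\alpha$ does not assign two consecutive slots $k-1,k$ to the same player (equivalently $b_{i,k}=0$ whenever $a_{i,k}>0$). Then player $i$'s unique dominant strategy is passthrough pricing, i.e. choosing a target depth $s_i$ whose marginal price equals the reference price: $\phi(s_i)=p_{\mathcal{O}}$.
   Context: A market is given by a price density function $\phi:U\to\mathbb{R}$ on an open set $U\subseteq(0,\infty)$, monotone decreasing (continuously differentiable); its argument is the liquidity depth. Fix a reference depth $x_{\mathcal{O}}>0$ and write $p_{\mathcal{O}}=\phi(x_{\mathcal{O}})$. The opportunity cost function is $C(x)=p_{\mathcal{O}}(x-x_{\mathcal{O}})+\int_x^{x_{\mathcal{O}}}\phi(u)\,du$. The game has $N$ players, $K$ liquidity orders of signed sizes $r_1,\dots,r_K$, an allocation $\alpha:\{0,\dots,K\}\to\{1,\dots,N\}$, and an initial depth $x_0>0$, where $x_0,(r_k),\alpha$ are random. Each player $i$ chooses a target depth $s_i\in A\subset(0,\infty)$. Conventions: $r_0=0$, $\alpha(-1)=0$, $s_0=x_0$. Utility: $U_i(\vec s)=\sum_{j:\alpha(j)=i}[C(s_{\alpha(j-1)}+r_j)-C(s_i)]$, and players maximize expected utility; $|C(s+r)|$ is assumed bounded by an integrable function. Primary weights $a_{i,k}=\mathbb{P}[\alpha(k)=i]$, secondary weights $b_{i,k}=\mathbb{P}[\alpha(k-1)=i\mid\alpha(k)=i]$. *)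

From HB Require Import structures.
From mathcomp Require Import all_boot all_order all_algebra.
From mathcomp Require Import all_classical all_reals all_analysis.
Set Implicit Arguments. Unset Strict Implicit. Unset Printing Implicit Defensive.
Import Order.TTheory GRing.Theory Num.Theory.
Import numFieldNormedType.Exports.
Local Open Scope classical_set_scope.
Local Open Scope ring_scope.

Definition oriented_integral {R : realType} (f : R -> R) (a b : R) : R :=
  if a <= b then Rintegral lebesgue_measure `[a, b] f
  else - Rintegral lebesgue_measure `[b, a] f.

Definition opp_cost {R : realType} (phi : R -> R) (xO x : R) : R :=
  phi xO * (x - xO) + oriented_integral phi x xO.

(* Convention alpha(-1) = 0 : previous slot of j (slot 0 has predecessor "player" 0). *)
Definition prev_player (alpha : nat -> nat) (j : nat) : nat :=
  match j with 0 => 0%N | j'.+1 => alpha j' end.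

Definition depth_of {R : realType} (s : nat -> R) (x0 : R) (i : nat) : R :=
  if i == 0%N then x0 else s i.

Definition order_size {R : realType} (r : nat -> R) (j : nat) : R :=
  if j == 0%N then 0 else r j.

(* Realized utility of player i for profile s (s i = target depth of player i, 1<=i<=N),
   with orders r_1..r_K, allocation alpha : {0..K} -> {1..N}, initial depth x0. *)
Definition utility {R : realType} (phi : R -> R) (xO : R) (K : nat)
    (alpha : nat -> nat) (r : nat -> R) (x0 : R) (s : nat -> R) (i : nat) : R :=
  \sum_(0 <= j < K.+1 | alpha j == i)
     (opp_cost phi xO (depth_of s x0 (prev_player alpha j) + order_size r j)
      - opp_cost phi xO (s i)).

Definition exp_utility {R : realType} {d : measure_display} {Omega : measurableType d}
    (P : probability Omega R) (phi : R -> R) (xO : R) (K : nat)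
    (alpha : nat -> Omega -> nat) (r : nat -> Omega -> R) (x0 : Omega -> R)
    (s : nat -> R) (i : nat) : \bar R :=
  (\int[P]_w (utility phi xO K (fun k => alpha k w) (fun k => r k w) (x0 w) s i)%:E)%E.

Definition update {R : realType} (s : nat -> R) (i : nat) (t : R) : nat -> R :=
  fun j => if j == i then t else s j.

Definition dominant {R : realType} {d : measure_display} {Omega : measurableType d}
    (P : probability Omega R) (phi : R -> R) (xO : R) (N K : nat)
    (alpha : nat -> Omega -> nat) (r : nat -> Omega -> R) (x0 : Omega -> R)
    (A : set R) (i : nat) (si : R) : Prop :=
  A si /\
  forall s : nat -> R, (forall j, (1 <= j <= N)%N -> A (s j)) ->
  forall t, A t ->
    (exp_utility P phi xO K alpha r x0 (update s i t) i
     <= exp_utility P phi xO K alpha r x0 (update s i si) i)%E.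

From HB Require Import structures.
From mathcomp Require Import all_boot all_order all_algebra.
From mathcomp Require Import all_classical all_reals all_analysis.
From mathcomp Require Import measurable_realfun lra.
Set Implicit Arguments. Unset Strict Implicit. Unset Printing Implicit Defensive.
Import Order.TTheory GRing.Theory Num.Theory.
Import numFieldNormedType.Exports.
Local Open Scope classical_set_scope.
Local Open Scope ring_scope.

(** Writing [C] for the opportunity cost, player [i]'s utility is a sum of
    costs [C(s_{alpha(k-1)} + r_k)] that, for a locally free allocation, never
    involve [s_i], minus [n_i C(s_i)], where [n_i] is the number of slots
    allocated to [i]. Hence the expected utility of playing [t] is
    [a - E[n_i] C(t)] with [E[n_i] > 0], whatever the other players do, and
    [s_i] is dominant iff it minimises [C] on [A]. Since [C' = p_O - phi] with
    [phi] nonincreasing, [C] lies above its tangents,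
    [C(t) >= C(s) + (p_O - phi(s)) (t - s)], so passthrough depths minimise [C];
    continuity of [phi] makes the inequality strict at any other depth. *)

Section integral_setS.
Local Open Scope ereal_scope.
Context d (T : measurableType d) (R : realType) (mu : {measure set T -> \bar R}).

Lemma ge0_le_integral_setS (D1 D2 : set T) (f : T -> \bar R) :
  (forall x, 0 <= f x) -> D1 `<=` D2 ->
  \int[mu]_(x in D1) f x <= \int[mu]_(x in D2) f x.
Proof.
move=> f0 D12; rewrite !ge0_integralE//.
apply: le_ereal_sup => _ [h hf <-]; exists h => //= x.
apply: le_trans (hf x) _; rewrite !patchE.
case: ifPn => [/set_mem/D12/mem_set -> //|_]; by case: ifP.
Qed.

End integral_setS.

Section monotone_emeasurable.
Context {R : realType}.

Lemma monotone_emeasurable (F : R -> \bar R) :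
  {homo F : x y / x <= y >-> (x <= y)%E} \/ {homo F : x y / y <= x >-> (x <= y)%E} ->
  measurable_fun setT F.
Proof.
move=> F_mono; apply: (measurability _ (ErealGenCInfty.measurableE R)) => //.
move=> _ [_ [x ->] <-]; rewrite setTI; apply: is_interval_measurable.
move=> a b /=; rewrite !in_itv /= !andbT => Fa Fb z /andP[az zb].
rewrite in_itv /= andbT.
by case: F_mono => F_mono;
  [apply: le_trans Fa (F_mono _ _ az) | apply: le_trans Fb (F_mono _ _ zb)].
Qed.

(* No measurability of [f] is needed: the integrals of [f^+] and [f^-] are
   monotone in the domain. *)
Lemma measurable_integral_monotone_domain (f : R -> \bar R) (D : R -> set R) :
  (forall x y, x <= y -> D x `<=` D y) \/ (forall x y, x <= y -> D y `<=` D x) ->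
  measurable_fun setT (fun x => \int[lebesgue_measure]_(t in D x) f t)%E.
Proof.
move=> D_mono; rewrite (_ : (fun x => _) = (fun x =>
    \int[lebesgue_measure]_(t in D x) f^\+ t - \int[lebesgue_measure]_(t in D x) f^\- t)%E);
  last by apply/funext => x; rewrite integralE.
have le_int g : (forall t, (0 <= g t)%E) -> forall x y, D x `<=` D y ->
    (\int[lebesgue_measure]_(t in D x) g t <= \int[lebesgue_measure]_(t in D y) g t)%E.
  by move=> g0 x y Dxy; exact: ge0_le_integral_setS.
by apply: emeasurable_funB; apply: monotone_emeasurable;
  case: D_mono => D_mono; [left|right|left|right] => x y /D_mono; apply: le_int.
Qed.

End monotone_emeasurable.

Lemma Rintegral_itv_cst (R : realType) (a b c : R) : a <= b ->
  \int[lebesgue_measure]_(_ in `[a, b]) c = c * (b - a).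
Proof.
move=> ab; rewrite Rintegral_cst //= lebesgue_measure_itv /= lte_fin.
by case: ltgtP ab => // -> _; rewrite subrr mulr0.
Qed.

Lemma Rintegral_itv_split (R : realType) (f : R -> R) (a b c : R) : a <= b -> b <= c ->
  lebesgue_measure.-integrable `[a, c] (EFin \o f) ->
  \int[lebesgue_measure]_(x in `[a, c]) f x =
  \int[lebesgue_measure]_(x in `[a, b]) f x + \int[lebesgue_measure]_(x in `[b, c]) f x.
Proof.
move=> ab bc itf; rewrite -[X in _ + X]Rintegral_itv_obnd_cbnd; last first.
  by apply: integrableS itf => //; apply: subset_itvr; rewrite bnd_simp.
have := @Rintegral_itvB R f (BLeft a) (BRight c) b itf.
by rewrite !bnd_simp => /(_ ab bc) <-; rewrite addrC subrK.
Qed.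

Lemma measurable_opp_cost (R : realType) (phi : R -> R) (xO : R) :
  measurable_fun setT (opp_cost phi xO).
Proof.
have mint (D : R -> set R) : (forall x y, x <= y -> D x `<=` D y) \/
    (forall x y, x <= y -> D y `<=` D x) ->
    measurable_fun setT (fun x => \int[lebesgue_measure]_(t in D x) phi t).
  move=> D_mono; apply: (measurableT_comp (fine_measurable _)) => //.
  exact: measurable_integral_monotone_domain.
rewrite /opp_cost /oriented_integral.
apply: measurable_funD; first by apply: measurable_funM => //; apply: measurable_funB.
apply: measurable_fun_ifT; first exact: measurable_fun_ler.
- apply: mint; right => x y xy z /=; rewrite !in_itv /= => /andP[yz ->].
  by rewrite (le_trans xy).
- apply: measurable_funN; apply: mint; left => x y xy z /=.
  by rewrite !in_itv /= => /andP[-> zx]; rewrite (le_trans zx).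
Qed.

Section price_density.
Variables (R : realType) (U : set R) (phi : R -> R).
Hypothesis U_itv : forall x y, U x -> U y -> `[x, y] `<=` U.
Hypothesis phi_derivable : {in U, forall x, derivable phi x 1}.
Hypothesis phi_nonincreasing : forall x y, U x -> U y -> x <= y -> phi y <= phi x.

Lemma continuous_price x : U x -> {for x, continuous phi}.
Proof.
move=> Ux; apply/differentiable_continuous; rewrite -derivable1_diffP.
by apply: phi_derivable; rewrite inE.
Qed.

Lemma integrable_price a b : U a -> U b ->
  lebesgue_measure.-integrable `[a, b] (EFin \o phi).
Proof.
move=> Ua Ub; apply: continuous_compact_integrable; first exact: segment_compact.
apply: derivable_within_continuous => z zab; apply: phi_derivable.
by rewrite inE; exact: (U_itv Ua Ub zab).
Qed.

Lemma oriented_integral_split x y z : U x -> U y -> U z ->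
  oriented_integral phi x z = oriented_integral phi x y + oriented_integral phi y z.
Proof.
move=> Ux Uy Uz.
have split a b c : U a -> U c -> a <= b -> b <= c ->
    \int[lebesgue_measure]_(t in `[a, c]) phi t =
    \int[lebesgue_measure]_(t in `[a, b]) phi t + \int[lebesgue_measure]_(t in `[b, c]) phi t.
  by move=> Ua Uc ab bc; apply: Rintegral_itv_split => //; exact: integrable_price.
rewrite /oriented_integral.
case: (leP x y) => xy; case: (leP y z) => yz; case: (leP x z) => xz.
- by rewrite (split x y z).
- lra.
- have := split x z y Ux Uy xz (ltW yz); lra.
- have := split z x y Uz Uy (ltW xz) xy; lra.
- have := split y x z Uy Uz (ltW xy) xz; lra.
- have := split y z x Uy Ux yz (ltW xz); lra.
- lra.
- have := split z y x Uz Ux (ltW yz) (ltW xy); lra.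
Qed.

Lemma opp_costB xO x y : U xO -> U x -> U y ->
  opp_cost phi xO y - opp_cost phi xO x = phi xO * (y - x) - oriented_integral phi x y.
Proof.
move=> UxO Ux Uy; rewrite /opp_cost (oriented_integral_split Ux Uy UxO); lra.
Qed.

Lemma Rintegral_price_bounds x y : U x -> U y -> x <= y ->
  phi y * (y - x) <= \int[lebesgue_measure]_(t in `[x, y]) phi t <= phi x * (y - x).
Proof.
move=> Ux Uy xy; have Uxy := U_itv Ux Uy.
have int_cst c : lebesgue_measure.-integrable `[x, y] (EFin \o fun=> c).
  apply: continuous_compact_integrable; first exact: segment_compact.
  by apply: continuous_subspaceT => z; exact: cvg_cst.
rewrite -!Rintegral_itv_cst //; apply/andP; split; apply: le_Rintegral => //;
  rewrite ?integrable_price // => z /[dup] /Uxy Uz; rewrite /= in_itv /= => /andP[xz zy];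
  exact: phi_nonincreasing.
Qed.

Lemma oriented_integral_le s t : U s -> U t -> oriented_integral phi s t <= phi s * (t - s).
Proof.
move=> Us Ut; rewrite /oriented_integral; case: (leP s t) => [st|/ltW ts].
  by case/andP: (Rintegral_price_bounds Us Ut st).
by case/andP: (Rintegral_price_bounds Ut Us ts) => + _; lra.
Qed.

Lemma opp_cost_le_passthrough xO s t : U xO -> U s -> U t -> phi s = phi xO ->
  opp_cost phi xO s <= opp_cost phi xO t.
Proof.
move=> UxO Us Ut phis; have := opp_costB UxO Us Ut.
have := oriented_integral_le Us Ut; rewrite phis; lra.
Qed.

Lemma exists_price_sign (c t : R) : open U -> U t -> phi t != c ->
  exists2 m, U m & (phi m - c) * (t - m) < 0.
Proof.
move=> oU Ut phit.
have gt0 : 0 < (phi t - c) * (phi t - c).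
  by rewrite lt0r mulf_eq0 orbb subr_eq0 phit -expr2 sqr_ge0.
have : \forall m \near t, U m /\ 0 < (phi m - c) * (phi t - c).
  apply: filterI; first exact: open_nbhs_nbhs.
  have : (phi m - c) * (phi t - c) @[m --> t] --> (phi t - c) * (phi t - c).
    apply: cvgM; last exact: cvg_cst.
    by apply: cvgB; [exact: continuous_price | exact: cvg_cst].
  by move/cvgr_gt; apply.
case/nbhs_ballP => e /= e0 near_t.
have nz : `|phi t - c| != 0 by rewrite normr_eq0 subr_eq0.
(* the witness lies at distance [e/2] from [t], on the side of the sign of [phi t - c] *)
pose k := e / (2 * `|phi t - c|).
have k0 : 0 < k by rewrite /k divr_gt0 // mulr_gt0 // normr_gt0 subr_eq0.
have [Um pos] : U (t + k * (phi t - c)) /\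
    0 < (phi (t + k * (phi t - c)) - c) * (phi t - c).
  apply: near_t; rewrite /ball /= opprD addNKr normrN normrM (gtr0_norm k0).
  by rewrite /k invfM mulrA mulfVK //; lra.
exists (t + k * (phi t - c)) => //.
by rewrite opprD addNKr mulrN mulrCA oppr_lt0 mulr_gt0.
Qed.

(* Splitting the integral at the point [m] of [exists_price_sign], the
   tangent bound on [[m, t]] beats the one at [s] by [(phi m - phi xO) (t - m)]. *)
Lemma opp_cost_lt_passthrough xO s t : open U -> U xO -> U s -> U t ->
  phi s = phi xO -> phi t != phi xO -> opp_cost phi xO s < opp_cost phi xO t.
Proof.
move=> oU UxO Us Ut phis phit.
have [m Um gap] := exists_price_sign oU Ut phit.
have := opp_costB UxO Us Ut; rewrite (oriented_integral_split Us Um Ut).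
have := oriented_integral_le Us Um; have := oriented_integral_le Um Ut.
rewrite phis; nra.
Qed.

End price_density.

Section allocation.
Variables (R : realType) (K : nat) (alpha : nat -> nat) (r : nat -> R) (x0 : R).

Definition locally_free := forall k, (1 <= k <= K)%N -> alpha k != alpha k.-1.

Definition allocated_count (i : nat) : R := \sum_(0 <= j < K.+1 | alpha j == i) 1.

Definition received_cost (C : R -> R) (s : nat -> R) (i : nat) : R :=
  \sum_(0 <= j < K.+1 | alpha j == i) C (depth_of s x0 (prev_player alpha j) + order_size r j).

Lemma utilityE phi xO s i : utility phi xO K alpha r x0 s i =
  received_cost (opp_cost phi xO) s i - allocated_count i * opp_cost phi xO (s i).
Proof.
rewrite /utility sumrB /received_cost /allocated_count big_distrl /=.
by congr (_ - _); apply: eq_bigr => j _; rewrite mul1r.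
Qed.

Lemma received_cost_update C s i t : locally_free ->
  received_cost C (update s i t) i = received_cost C s i.
Proof.
move=> free; rewrite /received_cost [LHS]big_mkcond [RHS]big_mkcond /=.
apply: eq_big_nat => j /andP[_ jK].
case: ifP => // /eqP alpha_j; case: j alpha_j jK => [|k] //= alpha_k kK.
rewrite /depth_of /update; case: ifP => // _; case: ifP => // /eqP alpha_k_i.
by have := free k.+1 kK; rewrite alpha_k alpha_k_i eqxx.
Qed.

Lemma allocated_count_ge0 i : 0 <= allocated_count i.
Proof. by apply: sumr_ge0 => j _; exact: ler01. Qed.

Lemma allocated_count_le i : allocated_count i <= K.+1%:R.
Proof.
rewrite /allocated_count big_mkcond /= -[K.+1]subn0 -sumr_const_nat.
by apply: ler_sum_nat => j _; case: ifP => _ //; exact: ler01.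
Qed.

Lemma allocated_count_ge1 i k : (k <= K)%N -> alpha k = i -> 1 <= allocated_count i.
Proof.
move=> kK alpha_k; rewrite /allocated_count big_mkcond.
rewrite (bigD1_seq k) ?mem_index_iota ?index_iota ?iota_uniq //=.
rewrite alpha_k eqxx lerDl sumr_ge0 // => j _; case: ifP => _ //; exact: ler01.
Qed.

Lemma norm_received_cost_le C s i b :
  (forall j, (j <= K)%N -> `|C (depth_of s x0 (prev_player alpha j) + order_size r j)| <= b) ->
  `|received_cost C s i| <= K.+1%:R * b.
Proof.
move=> Cb; apply: le_trans (ler_norm_sum _ _ _) _.
have -> : K.+1%:R * b = \sum_(0 <= j < K.+1) b by rewrite sumr_const_nat subn0 mulr_natl.
rewrite big_mkcond /=.
apply: ler_sum_nat => j /andP[_ jK]; case: ifP => _; first exact: Cb.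
exact: le_trans (normr_ge0 _) (Cb 0%N _).
Qed.

End allocation.

Lemma measurable_nat_fun d (T : measurableType d) (f : nat -> T) : measurable_fun setT f.
Proof. by []. Qed.

Section random_allocation.
Context d (Omega : measurableType d) (R : realType) (P : probability Omega R).
Variables (alpha : nat -> Omega -> nat) (r : nat -> Omega -> R) (x0 : Omega -> R) (K : nat).
Hypothesis measurable_alpha : forall k, measurable_fun setT (alpha k).
Hypothesis measurable_r : forall k, measurable_fun setT (r k).
Hypothesis measurable_x0 : measurable_fun setT x0.

Lemma measurable_allocated_count i :
  measurable_fun setT (fun w => allocated_count R K (alpha^~ w) i).
Proof.
rewrite /allocated_count; under eq_fun do rewrite big_mkcond /=.
apply: measurable_sum => j.
exact: (measurableT_comp (measurable_nat_fun (fun m => if m == i then 1 else 0 : R))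
  (measurable_alpha j)).
Qed.

Lemma measurable_received_cost C s i : measurable_fun setT C ->
  measurable_fun setT (fun w => received_cost K (alpha^~ w) (r^~ w) (x0 w) C s i).
Proof.
move=> mC; rewrite /received_cost; under eq_fun do rewrite big_mkcond /=.
apply: measurable_sum => j; apply: measurable_fun_ifT.
- exact: (measurableT_comp (measurable_nat_fun (eqn^~ i)) (measurable_alpha j)).
- apply: measurableT_comp mC _; case: j => [|k] /=; rewrite /depth_of /order_size /=.
    by apply: measurable_funD.
  apply: measurable_funD => //; apply: measurable_fun_ifT => //.
    exact: (measurableT_comp (measurable_nat_fun (eqn^~ 0%N)) (measurable_alpha k)).
  exact: (measurableT_comp (measurable_nat_fun s) (measurable_alpha k)).
- exact: measurable_cst.
Qed.

Lemma integrable_allocated_count i :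
  P.-integrable setT (EFin \o fun w => allocated_count R K (alpha^~ w) i).
Proof.
apply: (@le_integrable _ _ _ P setT measurableT _ (EFin \o cst K.+1%:R)).
- exact/measurable_EFinP/measurable_allocated_count.
- move=> w _; rewrite /comp !abse_EFin lee_fin ger0_norm ?allocated_count_ge0 //.
  by rewrite ger0_norm // allocated_count_le.
- exact: finite_measure_integrable_cst.
Qed.

Lemma expectation_allocated_count_gt0 i :
  (exists k, (k <= K)%N /\ (0 < P [set w | alpha k w = i])%E) ->
  (0 < \int[P]_w (allocated_count R K (alpha^~ w) i)%:E)%E.
Proof.
move=> [k [kK Pk]]; have mk : measurable [set w | alpha k w = i].
  by rewrite -[X in measurable X]setTI; exact: (measurable_alpha k measurableT (Y := [set i])).
apply: (lt_le_trans Pk); rewrite -(setIT [set w | _]) -(integral_indic P measurableT mk).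
apply: ge0_le_integral => //.
- exact/measurable_EFinP/measurable_indic.
- exact/measurable_EFinP/measurable_allocated_count.
- move=> w _; rewrite lee_fin indicE; case: (boolP (w \in _)) => [/set_mem|] /= alpha_k.
    exact: allocated_count_ge1 kK alpha_k.
  exact: allocated_count_ge0.
Qed.

Variables (phi : R -> R) (xO : R) (N : nat) (A : set R) (g : Omega -> R).
Local Notation C := (opp_cost phi xO).
Hypothesis alpha_range : forall k w, (k <= K)%N -> (1 <= alpha k w <= N)%N.
Hypothesis integrable_g : P.-integrable setT (EFin \o g).
Hypothesis C_x0_le : forall w, `|C (x0 w)| <= g w.
Hypothesis C_order_le : forall a k w, A a -> (1 <= k <= K)%N -> `|C (a + r k w)| <= g w.

Lemma integrable_received_cost s i : (forall j, (1 <= j <= N)%N -> A (s j)) ->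
  P.-integrable setT (EFin \o fun w => received_cost K (alpha^~ w) (r^~ w) (x0 w) C s i).
Proof.
move=> sA; have g0 w : 0 <= g w := le_trans (normr_ge0 _) (C_x0_le w).
apply: (@le_integrable _ _ _ P setT measurableT _ (fun w => (K.+1%:R)%:E * (EFin \o g) w)%E).
- by apply/measurable_EFinP; apply: measurable_received_cost; exact: measurable_opp_cost.
- move=> w _; rewrite /comp -EFinM !abse_EFin lee_fin (ger0_norm (mulr_ge0 (ler0n _ _) (g0 w))).
  apply: norm_received_cost_le => -[_|k kK] /=; rewrite /depth_of /order_size /=.
    by rewrite addr0.
  have /andP[alpha_k_gt0 alpha_k_le] := alpha_range w (ltnW kK).
  by rewrite eqn0Ngt alpha_k_gt0 /=; apply: C_order_le => //; apply: sA; rewrite alpha_k_gt0.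
- exact: integrableZl.
Qed.

Lemma exp_utility_update i s :
  {ae P, forall w, locally_free K (alpha^~ w)} ->
  (exists k, (k <= K)%N /\ (0 < P [set w | alpha k w = i])%E) ->
  (forall j, (1 <= j <= N)%N -> A (s j)) ->
  exists a b : R, 0 < b /\ forall t,
    exp_utility P phi xO K alpha r x0 (update s i t) i = (a - b * C t)%:E.
Proof.
move=> free_ae participates sA.
pose V w := received_cost K (alpha^~ w) (r^~ w) (x0 w) C s i.
pose n w := allocated_count R K (alpha^~ w) i.
have iV : P.-integrable setT (EFin \o V) by exact: integrable_received_cost.
have iN : P.-integrable setT (EFin \o n) by exact: integrable_allocated_count.
have mVn s' t : measurable_fun setT
    (fun w => (received_cost K (alpha^~ w) (r^~ w) (x0 w) C s' i - n w * C t)%:E).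
  apply/measurable_EFinP/measurable_funB.
    by apply: measurable_received_cost; exact: measurable_opp_cost.
  by apply: measurable_funM => //; exact: measurable_allocated_count.
have finV := integrable_fin_num measurableT iV.
have finN := integrable_fin_num measurableT iN.
exists (fine (\int[P]_w (V w)%:E)), (fine (\int[P]_w (n w)%:E)); split.
  have En_gt0 := expectation_allocated_count_gt0 participates.
  by apply: fine_gt0; rewrite En_gt0 -ge0_fin_numE // ltW.
move=> t; rewrite /exp_utility.
under eq_integral do rewrite utilityE {2}/update eqxx.
rewrite (ae_eq_integral (fun w => (V w - n w * C t)%:E)) //; try exact: mVn; last first.
  by apply: filterS free_ae => w free _; rewrite received_cost_update.
rewrite integralB_EFin //; last first.
  under eq_fun do rewrite mulrC.
  rewrite (_ : EFin \o _ = (fun w => (C t)%:E * (EFin \o n) w)%E); last first.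
    by apply/funext => w /=; rewrite EFinM.
  exact: integrableZl.
under [X in (_ - X)%E]eq_integral do rewrite EFinM.
by rewrite integralZr // -(fineK finV) -(fineK finN) -EFinM -EFinB.
Qed.

Lemma dominant_iff_opp_cost_min i si :
  {ae P, forall w, locally_free K (alpha^~ w)} ->
  (exists k, (k <= K)%N /\ (0 < P [set w | alpha k w = i])%E) ->
  A si ->
  dominant P phi xO N K alpha r x0 A i si <-> forall t, A t -> C si <= C t.
Proof.
move=> free_ae participates Asi; split.
- case=> _ dominates t At.
  have [a [b [b0 Eu]]] :=
    exp_utility_update (s := fun=> si) free_ae participates (fun _ _ => Asi).
  by have := dominates _ (fun _ _ => Asi) t At; rewrite !Eu lee_fin lerD2l lerN2 (ler_pM2l b0).
- move=> C_min; split=> [//|s sA t At].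
  have [a [b [b0 Eu]]] := exp_utility_update free_ae participates sA.
  by rewrite !Eu lee_fin lerD2l lerN2 (ler_pM2l b0); exact: C_min.
Qed.

End random_allocation.

Theorem mainTheorem2 (R : realType) (d : measure_display) (Omega : measurableType d)
    (P : probability Omega R)
    (U : set R) (phi : R -> R) (xO : R) (A : set R) (N K : nat)
    (alpha : nat -> Omega -> nat) (r : nat -> Omega -> R) (x0 : Omega -> R) (i : nat) :
  (* the price density *)
  open U -> U `<=` [set x | 0 < x] ->
  (forall x y, U x -> U y -> `[x, y] `<=` U) ->
  {in U, forall x, derivable phi x 1} -> {within U, continuous (derive1 phi)} ->
  (forall x y, U x -> U y -> x <= y -> phi y <= phi x) ->
  U xO -> 0 < xO ->
  (* strategy set *)
  A `<=` U -> A `<=` [set x | 0 < x] ->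
  (exists s, A s /\ phi s = phi xO) ->
  (* the random primitives *)
  (forall w, 0 < x0 w) -> measurable_fun setT x0 ->
  (forall k, measurable_fun setT (r k)) ->
  (forall k, measurable_fun setT (alpha k)) ->
  (forall k w, (k <= K)%N -> (1 <= alpha k w <= N)%N) ->
  (* integrability: |C(s + r)| bounded by an integrable function *)
  (exists g : Omega -> R, P.-integrable setT (EFin \o g) /\
     (forall w, `|opp_cost phi xO (x0 w)| <= g w) /\
     (forall s k w, A s -> (1 <= k <= K)%N ->
        `|opp_cost phi xO (s + r k w)| <= g w)) ->
  (* locally free allocation *)
  {ae P, forall w, forall k, (1 <= k <= K)%N -> alpha k w != alpha k.-1 w} ->
  (* player i actually participates *)
  (1 <= i <= N)%N ->
  (exists k, (k <= K)%N /\ (0 < P [set w | alpha k w = i])%E) ->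
  forall si, A si ->
    (dominant P phi xO N K alpha r x0 A i si <-> phi si = phi xO).
Proof.
move=> U_open _ U_itv phi_derivable _ phi_nonincreasing UxO _ AU _ [s0 [As0 phi_s0]]
  _ mx0 mr malpha alpha_range [g [ig [C_x0_le C_order_le]]] free_ae _ participates si Asi.
rewrite (dominant_iff_opp_cost_min malpha mr mx0 alpha_range ig C_x0_le C_order_le free_ae
  participates Asi).
split=> [C_min | phi_si t At].
- have [//|phi_si] := eqVneq (phi si) (phi xO).
  have := opp_cost_lt_passthrough U_itv phi_derivable phi_nonincreasing
    U_open UxO (AU _ As0) (AU _ Asi) phi_s0 phi_si.
  by rewrite ltNge C_min.
- exact: (opp_cost_le_passthrough U_itv phi_derivable phi_nonincreasing
    UxO (AU _ Asi) (AU _ At) phi_si).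
Qed.
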